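(* Let $G$ be a connected graph. Then $\mathrm{id}^{\leq 3}(G)\leq \left\lceil\frac{|E(G)|+\tau_3(G)}{2}\right\rceil$.
   Context: All graphs are finite and simple. A triangle-transversal of $G$ is a set $F$ of edges such that $G\setminus F$ contains no triangle; $\tau_3(G)$ is the minimum size of a triangle-transversal. For an oriented graph $D$ and $X\subseteq V(D)$, the inversion of $X$ reverses every arc with both endvertices in $X$; a $(\leq p)$-inversion is the inversion of a set of at most $p$ vertices. $\mathrm{id}^{\leq p}(G)$ is the maximum, over all ordered pairs $(\vec G_1,\vec G_2)$ of orientations of $G$, of the minimum number of $(\leq p)$-inversions transforming $\vec G_1$ into $\vec G_2$. *)

From mathcomp Require Import all_boot.
Set Implicit Arguments. Unset Strict Implicit. Unset Printing Implicit Defensive.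

Section Defs.
Variable T : finType.

Definition simple_graph (e : rel T) : Prop := symmetric e /\ irreflexive e.
Definition connected_graph (e : rel T) : Prop := forall x y : T, connect e x y.

Definition edges (e : rel T) : {set {set T}} :=
  [set [set a.1; a.2] | a : T * T & e a.1 a.2].

Definition triangle_transversal (e : rel T) (F : {set {set T}}) : bool :=
  [forall x : T, forall y : T, forall z : T,
     ~~ [&& e x y, e y z, e x z,
            [set x; y] \notin F, [set y; z] \notin F & [set x; z] \notin F]].

(* tau_3(G): minimum size of a triangle-transversal F subset of E(G)
   (E(G) itself is one, so #|E(G)| is a valid neutral element). *)
Definition tau3 (e : rel T) : nat :=
  \big[minn/#|edges e|]_(F : {set {set T}} |
       (F \subset edges e) && triangle_transversal e F) #|F|.

(* An orientation of G as its set of arcs (x,y), meaning x -> y. *)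
Definition orientation (e : rel T) (A : {set T * T}) : Prop :=
  (forall x y : T, (x, y) \in A -> e x y) /\
  (forall x y : T, e x y -> ((x, y) \in A) != ((y, x) \in A)).

Definition invert (X : {set T}) (A : {set T * T}) : {set T * T} :=
  [set a : T * T | if (a.1 \in X) && (a.2 \in X) then (a.2, a.1) \in A
                   else a \in A].

Definition apply_inversions (Xs : seq {set T}) (A : {set T * T}) :=
  foldl (fun B X => invert X B) A Xs.

Definition inv_reachable (p k : nat) (A1 A2 : {set T * T}) : Prop :=
  exists Xs : seq {set T},
    [/\ size Xs <= k, all (fun X : {set T} => #|X| <= p) Xs & apply_inversions Xs A1 = A2].

(* id^{<= p}(G) <= k : for every ordered pair of orientations, the minimum
   number of (<= p)-inversions transforming one into the other is <= k. *)
Definition id_le (e : rel T) (p k : nat) : Prop :=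
  forall A1 A2 : {set T * T}, orientation e A1 -> orientation e A2 ->
    inv_reachable p k A1 A2.

End Defs.

(* Fix a minimum triangle-transversal F and let H = G \ F.  H is triangle-free, and it is
   connected: by minimality every edge xy of F lies in a triangle whose two other edges
   avoid F.  In a triangle-free graph, inverting {v, a, b} with va, vb edges reverses
   exactly the arcs va and vb.  Peel the vertices of H in an order in which every vertex
   but the last has a later neighbour, and pair up the pending edges at each vertex into
   such inversions (only the arcs that must be reversed are put into the inverted set);
   when their number is odd, the edge to a later neighbour is left pending.  This
   realises any reversal pattern on E(H) with ceil(|E(H)|/2) (<= 3)-inversions.  The
   edges of F that are still wrong are then reversed one at a time, for a total of
   ceil((|E| - |F|)/2) + |F| <= ceil((|E| + tau_3)/2). *)

From mathcomp Require Import all_boot zify.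
Set Implicit Arguments. Unset Strict Implicit. Unset Printing Implicit Defensive.

Lemma half_ceil_addn m n : ~~ (odd m && odd n) ->
  m.+1 %/ 2 + n.+1 %/ 2 <= (m + n).+1 %/ 2.
Proof.
have := odd_double_half n; have := odd_double_half m.
by case: (odd n); case: (odd m) => //=; lia.
Qed.

Section Inversions.
Variable T : finType.
Implicit Types (Xs : seq {set T}) (A : {set T * T}) (e : rel T) (a b : T).

Definition cover_count Xs a b : nat :=
  count (fun X : {set T} => (a \in X) && (b \in X)) Xs.

Lemma cover_count_cat Xs Ys a b :
  cover_count (Xs ++ Ys) a b = cover_count Xs a b + cover_count Ys a b.
Proof. exact: count_cat. Qed.

Lemma cover_count_sym Xs a b : cover_count Xs a b = cover_count Xs b a.
Proof. by apply: eq_count => X; rewrite andbC. Qed.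

Lemma apply_inversionsE Xs A a b :
  ((a, b) \in apply_inversions Xs A) =
  if odd (cover_count Xs a b) then (b, a) \in A else (a, b) \in A.
Proof.
elim: Xs A => [|X Xs IH] A //=.
rewrite IH /invert !inE /= /cover_count /= oddD.
by case: (a \in X); case: (b \in X); case: (odd _).
Qed.

Lemma cover_count_pairs (P : {set {set T}}) a b :
  {in P, forall X : {set T}, #|X| <= 2} -> a != b ->
  cover_count (enum P) a b = ([set a; b] \in P).
Proof.
move=> P2 ab; rewrite -mem_enum -(count_uniq_mem _ (enum_uniq P)).
apply: eq_in_count => X; rewrite mem_enum => /P2 X2 /=.
apply/andP/eqP => [[aX bX]|->]; last by rewrite !inE !eqxx orbT.
apply/eqP; rewrite eq_sym eqEcard cards2 ab X2 andbT.
by apply/subsetP => z /set2P [] ->.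
Qed.

Lemma orientation_arc_off e A a b : orientation e A -> ~~ e a b -> ((a, b) \in A) = false.
Proof. by move=> [oA _] nab; apply: contraNF nab => /oA. Qed.

Lemma orientation_arc_rev e A a b :
  orientation e A -> e a b -> ((b, a) \in A) = ~~ ((a, b) \in A).
Proof. by move=> [_ oA] /oA; case: ((a, b) \in A); case: ((b, a) \in A). Qed.

Lemma orientation_diff_sym e A1 A2 a b : symmetric e ->
  orientation e A1 -> orientation e A2 ->
  (((a, b) \in A1) != ((a, b) \in A2)) = (((b, a) \in A1) != ((b, a) \in A2)).
Proof.
move=> esym o1 o2; case: (boolP (e a b)) => eab.
  rewrite (orientation_arc_rev o1 eab) (orientation_arc_rev o2 eab).
  by case: ((a, b) \in A1); case: ((a, b) \in A2).
have eba : ~~ e b a by rewrite esym.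
by rewrite !(orientation_arc_off o1) ?(orientation_arc_off o2).
Qed.

Lemma apply_inversions_orientation e A1 A2 Xs : symmetric e ->
  orientation e A1 -> orientation e A2 ->
  (forall a b, e a b -> odd (cover_count Xs a b) = (((a, b) \in A1) != ((a, b) \in A2))) ->
  apply_inversions Xs A1 = A2.
Proof.
move=> esym o1 o2 parXs; apply/setP => [[a b]]; rewrite apply_inversionsE.
case: (boolP (e a b)) => eab.
  rewrite parXs // (orientation_arc_rev o1 eab).
  by case: ((a, b) \in A1); case: ((a, b) \in A2).
have eba : ~~ e b a by rewrite esym.
by rewrite !(orientation_arc_off o1) ?(orientation_arc_off o2) ?if_same.
Qed.

End Inversions.

Section EdgeSets.
Variable T : finType.
Implicit Types (u : rel T) (a b v : T).

Lemma edgeP u E : reflect (exists a b, u a b /\ E = [set a; b]) (E \in edges u).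
Proof.
apply: (iffP imsetP) => [[[a b]] /=|[a [b [uab ->]]]].
  by rewrite inE /= => uab ->; exists a, b.
by exists (a, b); rewrite ?inE.
Qed.

Lemma set2_cases a b c c' : a != b -> [set a; b] = [set c; c'] ->
  (c = a /\ c' = b) \/ (c = b /\ c' = a).
Proof.
move=> + E; have := set21 a b; have := set22 a b; rewrite E.
by move=> /set2P [] -> /set2P [] -> ab;
  [rewrite eqxx in ab | right | left | rewrite eqxx in ab].
Qed.

Lemma card_edge u E : E \in edges u -> #|E| <= 2.
Proof. by case/edgeP => a [b [_ ->]]; rewrite cards2; case: (a != b). Qed.

Lemma edges_eq0 u : (forall a b, ~~ u a b) -> #|edges u| = 0.
Proof.
move=> u0; apply: eq_card0 => E; apply/edgeP => -[a [b [uab _]]].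
by move: (u0 a b); rewrite uab.
Qed.

Definition prune u v (P : pred T) : rel T :=
  [rel a b | [&& u a b, (a == v) ==> P b & (b == v) ==> P a]].

Lemma prune_sym u v P : symmetric u -> symmetric (prune u v P).
Proof. by move=> usym a b; rewrite /prune /= usym [X in _ && X]andbC. Qed.

Lemma edges_prune u v P : symmetric u -> irreflexive u ->
  #|edges u| = #|edges (prune u v P)| + #|[set a | u v a && ~~ P a]|.
Proof.
move=> usym uirr; set N := [set a | u v a && ~~ P a].
have v_neq a : a \in N -> v != a.
  by rewrite inE => /andP [uva _]; apply: contraTneq uva => <-; rewrite uirr.
have -> : edges u = edges (prune u v P) :|: [set [set v; a] | a in N].
  apply/setP => E; rewrite in_setU; apply/edgeP/orP => [[a [b [uab ->]]]|].
    case pab: (prune u v P a b); first by left; apply/edgeP; exists a, b.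
    right; apply/imsetP; move/negbT: pab; rewrite /prune /= uab /= negb_and !negb_imply.
    case/orP => /andP [/eqP av nPb]; first by exists b; [rewrite inE -av uab | rewrite av].
    by exists a; [rewrite inE -av usym uab | rewrite av setUC].
  case=> [/edgeP [a [b [/and3P [uab _ _] ->]]]|/imsetP [a]]; first by exists a, b.
  by rewrite inE => /andP [uva _] ->; exists v, a.
rewrite cardsU (_ : _ :&: _ = set0) ?cards0 ?subn0; last first.
  apply/setP => E; rewrite !inE; apply/andP => -[/edgeP [x [y [pxy ->]]]].
  case/imsetP => a aN /esym /(set2_cases (v_neq a aN)) [] [xv ya];
    move: pxy aN; rewrite xv ya.
    by rewrite /prune inE /= eqxx /= => /and3P [_ -> _] /andP [].
  by rewrite /prune inE /= eqxx /= => /and3P [_ _ ->] /andP [].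
congr (_ + _); apply: card_in_imset => a b aN.
move=> _ /(set2_cases (v_neq a aN)) [[_ ->] // | [va _]].
by move: (v_neq a aN); rewrite va eqxx.
Qed.

End EdgeSets.

Section TriangleFree.
Variable T : finType.
Variable h : rel T.
Hypothesis hsym : symmetric h.
Hypothesis hirr : irreflexive h.
Hypothesis htri : forall x y z, h x y -> h y z -> h x z -> False.
Implicit Types (d u : rel T) (s k : seq T) (v x y : T).

Definition star_set d v k : {set T} := v |: [set c | (c \in k) && d v c].

Fixpoint star d v s : seq {set T} :=
  match s with
  | a :: b :: s' => star_set d v [:: a; b] :: star d v s'
  | [:: a] => [:: star_set d v [:: a]]
  | [::] => [::]
  end.

Lemma size_star d v s : size (star d v s) = (size s).+1 %/ 2.
Proof.
have [n] := ubnP (size s); elim: n s => // n IH [|a [|b s]] //= lt_s_n.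
by rewrite IH; lia.
Qed.

Lemma card_star_set d v k : size k <= 2 -> #|star_set d v k| <= 3.
Proof.
move=> k2; rewrite cardsU1; apply: leq_add (leq_b1 _) _.
apply: leq_trans k2; apply: leq_trans (card_size k).
by apply: subset_leq_card; apply/subsetP => c; rewrite inE => /andP [].
Qed.

Lemma star_small d v s : all (fun X : {set T} => #|X| <= 3) (star d v s).
Proof.
have [n] := ubnP (size s); elim: n s => // n IH [|a [|b s]] //= lt_s_n.
  by rewrite card_star_set.
by rewrite card_star_set //= IH //; lia.
Qed.

Lemma star_set_cover d v k x y : h x y -> {in k, forall c, h v c} ->
  (x \in star_set d v k) && (y \in star_set d v k) =
  ((x == v) && (y \in k) && d v y) || ((y == v) && (x \in k) && d v x).
Proof.
move=> hxy hk; rewrite !in_setU1 !inE.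
have /negbTE yx : y != x by apply: contraTneq hxy => ->; rewrite hirr.
have [<- | _] /= := eqVneq x v; first by rewrite yx orbF.
have [_ | _] /= := eqVneq y v; first by rewrite andbT.
case xk: (x \in k); case yk: (y \in k); rewrite ?andbF //=.
case: (d v x); case: (d v y) => //=.
by case: (htri (y := v) _ (hk y yk) hxy); rewrite hsym hk.
Qed.

Lemma star_cover_count d v s x y : uniq s -> {in s, forall c, h v c} -> h x y ->
  cover_count (star d v s) x y =
  ((x == v) && (y \in s) && d v y) || ((y == v) && (x \in s) && d v x).
Proof.
move=> + + hxy; have not_both_v : ~~ ((x == v) && (y == v)).
  by apply: contraTN hxy => /andP [/eqP -> /eqP ->]; rewrite hirr.
have [n] := ubnP (size s); elim: n s => // n IH [|a [|b s]] lt_s_n us hs;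
  rewrite /cover_count /= -/(cover_count _ x y).
- by rewrite !in_nil !andbF.
- by rewrite addn0 star_set_cover.
move: us; rewrite (cat_uniq [:: a; b] s) => /and3P [_ /hasPn ab_s us].
have h_ab : {in [:: a; b], forall c, h v c}.
  by move=> c c_ab; apply: hs; rewrite (mem_cat c [:: a; b] s) c_ab.
have h_s : {in s, forall c, h v c} by move=> c c_s; apply: hs; rewrite !inE c_s !orbT.
rewrite star_set_cover // IH //; last by move: lt_s_n => /=; lia.
rewrite (mem_cat x [:: a; b] s) (mem_cat y [:: a; b] s).
have /implyP ab_x := @ab_s x; have /implyP ab_y := @ab_s y; move: not_both_v ab_x ab_y.
by case: (x == v); case: (y == v); case: (x \in [:: a; b]); case: (y \in [:: a; b]);
  case: (x \in s); case: (y \in s); case: (d v x); case: (d v y).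
Qed.

Fixpoint peeling_order s : bool :=
  if s is v :: s' then ((s' == [::]) || has (h v) s') && peeling_order s' else true.

Lemma connect_exit s a y : connect h a y -> a \in s -> y \notin s ->
  exists2 c, c \notin s & has (h c) s.
Proof.
case/connectP => p + ->; elim: p a => [|z p IH] a /=; first by move=> _ ->.
case/andP => haz pz a_s; have [z_s | z_s _] := boolP (z \in s); first exact: IH.
by exists z => //; apply/hasP; exists a; rewrite // hsym.
Qed.

Lemma peeling_order_exists : (forall x y, connect h x y) ->
  exists s, [/\ uniq s, peeling_order s & forall x, x \in s].
Proof.
move=> hconn.
suff extend : forall s, uniq s -> peeling_order s ->
  exists s', [/\ uniq s', peeling_order s' & forall x, x \in s'] by apply: (extend [::]).
move=> s; have [n] := ubnP (#|T| - size s); elim: n s => // n IH s lt_n us ps.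
have [/forallP all_s | /forallPn [y y_s]] := boolP [forall x, x \in s]; first by exists s.
have [c c_s pcs] : exists2 c, c \notin s & peeling_order (c :: s).
  case: s y_s {lt_n us} ps => [|a s] y_s ps; first by exists y.
  have [c c_s hcs] := connect_exit (hconn a y) (mem_head a s) y_s.
  by exists c => //; apply/andP; split => //; apply/orP; right.
apply: (IH (c :: s)) => //=; last by rewrite c_s.
have : size (c :: s) <= #|T| by rewrite -(card_uniqP _) ?max_card //= c_s.
by move: lt_n => /=; lia.
Qed.

(* The invariant of the peeling: u is the set of edges still to be handled while the
   vertices of s remain to be peeled. *)
Definition pending s u : Prop :=
  [/\ symmetric u, subrel u h, {in s &, forall a b, h a b -> u a b}
    & forall a b, u a b -> (a \in s) || (b \in s)].

Lemma pending_full s : (forall x, x \in s) -> pending s h.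
Proof. by move=> all_s; split=> // a b _; rewrite all_s. Qed.

Lemma pending_nil u : pending [::] u -> forall a b, ~~ u a b.
Proof. by case=> _ _ _ u_out a b; apply/negP => /u_out. Qed.

Lemma pending_prune v s u (P : pred T) : v \notin s -> {subset P <= s} ->
  pending (v :: s) u -> pending s (prune u v P).
Proof.
move=> v_s Ps [usym uh u_in u_out]; split.
- exact: prune_sym.
- by move=> a b /and3P [/uh].
- move=> a b a_s b_s hab; rewrite /prune /= u_in ?inE ?a_s ?b_s ?orbT //.
  by rewrite (negbTE (memPn v_s a a_s)) (negbTE (memPn v_s b b_s)).
move=> a b /and3P [/u_out]; rewrite !inE.
have [-> _ /Ps -> // | _] := eqVneq a v; first by rewrite orbT.
by have [-> _ _ /Ps -> | _ ab] //= := eqVneq b v; rewrite implybT.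
Qed.

Lemma prune_cover_count d v s u (P : pred T) x y : (forall a b, d a b = d b a) ->
  pending (v :: s) u -> h x y ->
  odd (cover_count (star d v (enum [set a | u v a && ~~ P a])) x y)
    (+) (prune u v P x y && d x y) = u x y && d x y.
Proof.
move=> dsym [usym uh _ _] hxy.
rewrite star_cover_count ?enum_uniq //; last first.
  by move=> c; rewrite mem_enum inE => /andP [/uh].
rewrite !mem_enum !inE /prune /=.
have [<- | _] := eqVneq x v.
  have /negbTE -> : y != x by apply: contraTneq hxy => ->; rewrite hirr.
  by rewrite /= oddb; case: (u x y); case: (P y); case: (d x y).
have [<- | _] := eqVneq y v.
  by rewrite /= oddb (usym y) (dsym y); case: (u x y); case: (P x); case: (d x y).
by rewrite /= !andbT.
Qed.

(* When v has an odd number of pending edges, the one towards a later neighbour p stays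
   pending (P = pred1 p), so that no inversion is wasted on an unpaired edge. *)
Lemma balanced_prune v s u : peeling_order (v :: s) -> pending (v :: s) u ->
  exists P : pred T, {subset P <= s} /\
    ~~ (odd #|[set a | u v a && ~~ P a]| && odd #|edges (prune u v P)|).
Proof.
move=> /andP [/orP [/eqP s0 | /hasP [p p_s hvp]] _] [usym uh u_in u_out].
  exists xpred0; split => //; rewrite (@edges_eq0 _ (prune u v xpred0)) ?andbF //.
  move=> a b; apply/and3P => -[/u_out]; rewrite s0 !inE.
  by case/orP => ->.
have uvp : u v p by rewrite u_in ?inE ?eqxx ?p_s ?orbT.
have [oddN | evenN] := boolP (odd #|[set a | u v a]|).
  exists (pred1 p); split; first by move=> a /eqP ->.
  rewrite (_ : [set a | _] = [set a | u v a] :\ p); last first.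
    by apply/setP => a; rewrite !inE andbC.
  by move: oddN; rewrite (cardsD1 p) inE uvp add1n /= => /negbTE ->.
exists xpred0; split => //.
rewrite (_ : [set a | _] = [set a | u v a]) ?(negbTE evenN) //.
by apply/setP => a; rewrite !inE andbT.
Qed.

Lemma pending_parity_inversions d s u : (forall a b, d a b = d b a) ->
  uniq s -> peeling_order s -> pending s u ->
  exists Ys : seq {set T}, [/\ size Ys <= (#|edges u|).+1 %/ 2,
    all (fun X : {set T} => #|X| <= 3) Ys &
    forall a b, h a b -> odd (cover_count Ys a b) = u a b && d a b].
Proof.
move=> dsym; elim: s u => [|v s IH] u.
  by move=> _ _ /pending_nil u0; exists [::]; split=> // a b _; rewrite (negbTE (u0 a b)).
rewrite cons_uniq => /andP [v_s us] ps pu; have [usym uh _ _] := pu.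
have uirr : irreflexive u by move=> a; apply: contraFF (@uh a a) (hirr a).
have [P [Ps balanced]] := balanced_prune ps pu.
have [|Ys [size_Ys small_Ys par_Ys]] := IH (prune u v P) us _ (pending_prune v_s Ps pu).
  by case/andP: ps.
exists (star d v (enum [set a | u v a && ~~ P a]) ++ Ys); split.
- rewrite size_cat size_star -cardE (edges_prune v P usym uirr).
  by have := half_ceil_addn balanced; lia.
- by rewrite all_cat star_small.
- move=> a b hab.
  by rewrite cover_count_cat oddD par_Ys // (prune_cover_count P dsym pu).
Qed.

End TriangleFree.

Section Transversals.
Variable T : finType.
Implicit Types (e : rel T) (F : {set {set T}}).

Definition remove_edges e F : rel T := [rel x y | e x y && ([set x; y] \notin F)].

Lemma remove_edges_sym e F : symmetric e -> symmetric (remove_edges e F).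
Proof. by move=> esym x y; rewrite /remove_edges /= esym setUC. Qed.

Lemma remove_edges_irr e F : irreflexive e -> irreflexive (remove_edges e F).
Proof. by move=> eirr x; rewrite /remove_edges /= eirr. Qed.

Lemma remove_transversal_triangle_free e F : triangle_transversal e F ->
  forall x y z, remove_edges e F x y -> remove_edges e F y z -> remove_edges e F x z -> False.
Proof.
move=> /forallP tr x y z /andP [exy nxy] /andP [eyz nyz] /andP [exz nxz].
by move: (forallP (forallP (tr x) y) z); rewrite exy eyz exz nxy nyz nxz.
Qed.

Lemma edges_remove_edges e F : edges (remove_edges e F) = edges e :\: F.
Proof.
apply/setP => E; rewrite in_setD; apply/edgeP/andP.
  by move=> [a [b [/andP [eab nF] ->]]]; split => //; apply/edgeP; exists a, b.
move=> [nF /edgeP [a [b [eab Eab]]]]; exists a, b; split => //.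
by rewrite /remove_edges /= eab -Eab.
Qed.

Lemma edges_transversal e : triangle_transversal e (edges e).
Proof.
apply/forallP => x; apply/forallP => y; apply/forallP => z.
apply/negP => /and4P [exy _ _ /andP [/negP nF _]].
by apply: nF; apply/edgeP; exists x, y.
Qed.

Lemma tau3_min_transversal e : exists F,
  [/\ F \subset edges e, triangle_transversal e F, #|F| <= tau3 e &
      forall F', F' \subset edges e -> triangle_transversal e F' -> #|F| <= #|F'|].
Proof.
have Pe : (edges e \subset edges e) && triangle_transversal e (edges e).
  by rewrite subxx edges_transversal.
case: (@arg_minnP _ (edges e) (fun F => (F \subset edges e) && triangle_transversal e F)
  (fun F => #|F|) Pe) => F /andP [Fsub Ftr] Fmin.
exists F; split => // [|F' F'sub F'tr]; last by apply: Fmin; rewrite F'sub F'tr.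
apply: (big_ind (fun n => #|F| <= n)) => [||G]; first exact: Fmin.
  by move=> m n Fm Fn; rewrite leq_min Fm Fn.
exact: Fmin.
Qed.

Lemma pair_parity_fix F (Ys : seq {set T}) (d : rel T) :
  {in F, forall X : {set T}, #|X| <= 2} -> (forall a b, d a b = d b a) ->
  exists Zs : seq {set T}, [/\ size Zs <= #|F|, all (fun X : {set T} => #|X| <= 2) Zs &
    forall a b, a != b -> odd (cover_count (Ys ++ Zs) a b) =
      if [set a; b] \in F then d a b else odd (cover_count Ys a b)].
Proof.
move=> F2 dsym; set wrong := fun a b => d a b != odd (cover_count Ys a b).
have wrong_sym a b : wrong a b = wrong b a by rewrite /wrong dsym cover_count_sym.
set Fz := [set X in F | [exists p : T * T, (X == [set p.1; p.2]) && wrong p.1 p.2]].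
have FzF : Fz \subset F by apply/subsetP => X; rewrite inE => /andP [].
have Fz2 : {in Fz, forall X : {set T}, #|X| <= 2} by move=> X /(subsetP FzF) /F2.
exists (enum Fz); split.
- by rewrite -cardE subset_leq_card.
- by apply/allP => X; rewrite mem_enum => /Fz2.
move=> a b ab; rewrite cover_count_cat oddD cover_count_pairs // inE.
case: ifP => abF /=; last by rewrite addbF.
have -> : [exists p : T * T, ([set a; b] == [set p.1; p.2]) && wrong p.1 p.2] = wrong a b.
  apply/existsP/idP => [[[p q] /andP [/eqP /(set2_cases ab) [] [-> ->] //]] | w].
    by rewrite wrong_sym.
  by exists (a, b); rewrite /= eqxx.
by rewrite /wrong; case: (d a b); case: (odd _).
Qed.

Section MinimumTransversal.
Variables (e : rel T) (F : {set {set T}}).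
Hypotheses (e_sym : symmetric e) (e_irr : irreflexive e).
Hypotheses (Fsub : F \subset edges e) (Ftr : triangle_transversal e F).
Hypothesis Fmin : forall F', F' \subset edges e -> triangle_transversal e F' -> #|F| <= #|F'|.

(* By minimality F :\ xy misses a triangle; that triangle must use xy, and its two other
   edges avoid F. *)
Lemma min_transversal_bypass x y : e x y -> [set x; y] \in F ->
  exists2 z, remove_edges e F x z & remove_edges e F z y.
Proof.
move=> exy xyF; set E := [set x; y].
have xy : x != y by apply: contraTneq exy => ->; rewrite e_irr.
have : ~~ triangle_transversal e (F :\ E).
  apply/negP => tr; have := Fmin (subset_trans (subD1set F E) Fsub) tr.
  by rewrite [X in X <= _](cardsD1 E) xyF add1n ltnn.
case/forallPn => a /forallPn [b /forallPn [c /negPn /and5P [eab ebc eac nab /andP [nbc nac]]]].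
wlog abF : a b c eab ebc eac nab nbc nac / [set a; b] \in F.
  move=> bypass; move: (forallP (forallP (forallP Ftr a) b) c).
  rewrite eab ebc eac /=.
  case: (boolP ([set a; b] \in F)) => [abF _|_]; first exact: (bypass a b c).
  case: (boolP ([set b; c] \in F)) => [bcF _|_].
    apply: (bypass b c a ebc _ _ nbc _ _ bcF); rewrite 1?e_sym //.
      by rewrite (setUC [set c]).
    by rewrite (setUC [set b]).
  case: (boolP ([set a; c] \in F)) => [acF _|_] //.
  apply: (bypass a c b eac _ eab nac _ nab acF); first by rewrite e_sym.
  by rewrite (setUC [set c]).
have abE : [set a; b] = E by apply/eqP; move: nab; rewrite in_setD1 abF andbT negbK.
have c_ab : c \notin [set a; b].
  rewrite !inE negb_or; apply/andP; split.
    by apply: contraTneq eac => ->; rewrite e_irr.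
  by apply: contraTneq ebc => ->; rewrite e_irr.
have outF (w : {set T}) : c \in w -> w \notin F :\ E -> w \notin F.
  move=> cw; rewrite in_setD1 negb_and negbK => /orP [/eqP wE | //].
  by move: c_ab; rewrite abE -wE cw.
have nacF := outF _ (set22 a c) nac; have nbcF := outF _ (set22 b c) nbc.
case: (set2_cases xy (esym abE)) => [] [<- <-]; exists c.
- by rewrite /remove_edges /= eac nacF.
- by rewrite /remove_edges /= e_sym ebc setUC nbcF.
- by rewrite /remove_edges /= ebc nbcF.
- by rewrite /remove_edges /= e_sym eac setUC nacF.
Qed.

Lemma min_transversal_connected : connected_graph e -> connected_graph (remove_edges e F).
Proof.
move=> econ x y; apply: connect_sub (econ x y) => {}x {}y exy.
have [xyF | xyF] := boolP ([set x; y] \in F).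
  have [z xz zy] := min_transversal_bypass exy xyF.
  exact: connect_trans (connect1 xz) (connect1 zy).
by apply: connect1; rewrite /remove_edges /= exy xyF.
Qed.

End MinimumTransversal.
End Transversals.

Theorem mainTheorem8 (T : finType) (e : rel T) :
  simple_graph e -> connected_graph e ->
  id_le e 3 ((#|edges e| + tau3 e).+1 %/ 2).
Proof.
move=> [esym eirr] econ A1 A2 o1 o2.
have [F [Fsub Ftr Ftau Fmin]] := tau3_min_transversal e.
set h := remove_edges e F.
have hsym : symmetric h := remove_edges_sym F esym.
have [s [us ps all_s]] := peeling_order_exists hsym
  (min_transversal_connected esym eirr Fsub Ftr Fmin econ).
set d := fun a b => ((a, b) \in A1) != ((a, b) \in A2).
have dsym a b : d a b = d b a := orientation_diff_sym a b esym o1 o2.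
have [Ys [size_Ys small_Ys par_Ys]] := pending_parity_inversions hsym
  (remove_edges_irr F eirr) (remove_transversal_triangle_free Ftr) dsym us ps
  (pending_full hsym all_s).
have [Zs [size_Zs small_Zs par_Zs]] :=
  pair_parity_fix Ys (fun X XF => card_edge (subsetP Fsub X XF)) dsym.
exists (Ys ++ Zs); split.
- move: size_Ys; rewrite size_cat edges_remove_edges cardsDS //.
  by have := subset_leq_card Fsub; lia.
- by rewrite all_cat small_Ys; apply: sub_all small_Zs => X /leqW.
apply: apply_inversions_orientation => // a b eab.
have ab : a != b by apply: contraTneq eab => ->; rewrite eirr.
by rewrite par_Zs //; case: ifP => abF //; rewrite par_Ys /h /remove_edges /= ?eab ?abF.
Qed.
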